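(* Let $G$ be a finite graph and let $v$ be a vertex of $G$ of degree at most five such that there is no $v$-immersion of $K_6$ into $G$. If $G-v$ has a proper $5$-coloring, then so does $G$.
   Context: Graphs are finite and simple. An immersion of $G'$ into $G$ is a function $\alpha$ on $V(G')\cup E(G')$ such that: $\alpha$ restricted to $V(G')$ is an injection into $V(G)$; for each edge $e=uw$ of $G'$, $\alpha(e)$ is a path in $G$ with ends $\alpha(u)$ and $\alpha(w)$; and for distinct edges $e,f$ of $G'$ the paths $\alpha(e),\alpha(f)$ are edge-disjoint. It is essential if moreover $\alpha(e)$ and $\alpha(f)$ are vertex-disjoint whenever $e$ and $f$ are non-adjacent edges. For a vertex $v$ of $G$, a $v$-immersion of $G'$ into $G$ is an essential immersion $\alpha$ of $G'$ into $G$ such that $v=\alpha(u)$ for some vertex $u$ of $G'$ and $\alpha(e)$ is a single-edge path for every edge $e$ of $G'$ incident with $u$. A proper coloring assigns colors to vertices so that adjacent vertices receive distinct colors. *)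

From mathcomp Require Import all_boot.
Set Implicit Arguments. Unset Strict Implicit. Unset Printing Implicit Defensive.

(* A finite simple graph: vertex type T : finType, adjacency e : rel T,
   assumed symmetric and irreflexive (as hypotheses of the theorem). *)

Definition is_graph_path (T : finType) (e : rel T) (x y : T) (s : seq T) : bool :=
  [&& path e x s, last x s == y & uniq (x :: s)].

(* The edges (as unordered pairs = 2-element sets) traversed by the path x :: s. *)
Definition path_edges (T : finType) (x : T) (s : seq T) : seq {set T} :=
  [seq [set p.1; p.2] | p <- zip (x :: s) s].

Definition edge_disjoint (T : finType) (x : T) (s : seq T) (y : T) (t : seq T) : bool :=
  ~~ has (mem (path_edges x s)) (path_edges y t).

Definition vertex_disjoint (T : finType) (x : T) (s : seq T) (y : T) (t : seq T) : bool :=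
  ~~ has (mem (x :: s)) (y :: t).

(* The vertices of K6 are 'I_6, its edges the
   pairs {i,j} with i < j.  f is the vertex map, P i j encodes the path
   alpha({i,j}) as f i :: P i j (ending at f j), u is the vertex of K6 with
   f u = v. *)
Definition v_immersion_K6 (T : finType) (e : rel T) (v : T) : Prop :=
  exists (f : 'I_6 -> T) (P : 'I_6 -> 'I_6 -> seq T) (u : 'I_6),
    [/\ injective f,
        f u = v /\
        (forall i j : 'I_6, i < j -> is_graph_path e (f i) (f j) (P i j)),
        (forall i j k l : 'I_6, i < j -> k < l -> (i, j) != (k, l) ->
           edge_disjoint (f i) (P i j) (f k) (P k l)),
        (forall i j k l : 'I_6, i < j -> k < l ->
           [&& i != k, i != l, j != k & j != l] ->
           vertex_disjoint (f i) (P i j) (f k) (P k l))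
      &
        (forall i j : 'I_6, i < j -> (i == u) || (j == u) -> size (P i j) = 1)].

Definition proper_coloring (T : finType) (e : rel T) (k : nat) (c : T -> 'I_k) : Prop :=
  forall x y, e x y -> c x != c y.

(* Proper k-colouring of G - v (only vertices other than v are coloured;
   the value at v is irrelevant) *)
Definition proper_coloring_minus (T : finType) (e : rel T) (v : T) (k : nat)
  (c : T -> 'I_k) : Prop :=
  forall x y, x != v -> y != v -> e x y -> c x != c y.

From mathcomp Require Import all_boot perm.
Set Implicit Arguments. Unset Strict Implicit. Unset Printing Implicit Defensive.

(* Kempe's argument.  If a colour is missing on the at most five neighbours
   of v, give it to v.  Otherwise the neighbours x_0, ..., x_4 of v carry the
   five colours bijectively.  If for some i <> j the vertices x_i and x_j lie
   in different components of the subgraph of G - v induced by the colours i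
   and j, swapping i and j on the component of x_i frees the colour i for v.
   Otherwise pick an (i,j)-coloured path from x_i to x_j for every pair and
   add the edges v x_i.  Giving v a sixth colour, every edge of the path of
   the pair {i,j} sees exactly the colours i and j, so distinct pairs get
   edge-disjoint paths and disjoint pairs get vertex-disjoint paths: this is
   a v-immersion of K6. *)

Section PathEdges.

Variable T : finType.

Lemma path_edges_sub (x : T) s E : E \in path_edges x s -> {subset E <= x :: s}.
Proof.
elim: s x => //= y s IH x; rewrite inE => /orP[/eqP-> w|/IH sub w /sub ws].
  by rewrite !inE => /orP[]->; rewrite ?orbT.
by rewrite inE ws orbT.
Qed.

Lemma path_edges_adj (e : rel T) x s E :
  path e x s -> E \in path_edges x s -> exists a b, E = [set a; b] /\ e a b.
Proof.
elim: s x => //= y s IH x /andP[exy ys]; rewrite inE => /orP[/eqP->|]; last exact: IH.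
by exists x, y.
Qed.

End PathEdges.

Lemma ord_pair_of_lt n (i j a b : 'I_n) : i < j -> a < b ->
  a \in [:: i; j] -> b \in [:: i; j] -> (a, b) = (i, j).
Proof.
move=> ij ab; rewrite !inE => /orP[]/eqP ea /orP[]/eqP eb; subst; rewrite ?ltnn // in ab.
by have := ltn_trans ij ab; rewrite ltnn.
Qed.

Lemma ord_pair_eq n (i j k l a b : 'I_n) : i < j -> k < l -> a != b ->
  a \in [:: i; j] -> b \in [:: i; j] -> a \in [:: k; l] -> b \in [:: k; l] ->
  (i, j) = (k, l).
Proof.
move=> ij kl; rewrite neq_ltn => /orP[ab|ba] ai bi ak bk.
  by rewrite -(ord_pair_of_lt ij ab) ?(ord_pair_of_lt kl ab).
by rewrite -(ord_pair_of_lt ij ba) ?(ord_pair_of_lt kl ba).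
Qed.

Section BichromaticPaths.

Variables (T : finType) (e : rel T) (d : T -> 'I_6) (f : 'I_6 -> T).
Variable P : 'I_6 -> 'I_6 -> seq T.
Hypothesis d_proper : proper_coloring e d.
Hypothesis fK : cancel f d.
Hypothesis P_path : forall i j : 'I_6, i < j -> is_graph_path e (f i) (f j) (P i j).
Hypothesis P_colors :
  forall i j : 'I_6, i < j -> all (fun w => d w \in [:: i; j]) (f i :: P i j).

Lemma bichromatic_edge_disjoint (i j k l : 'I_6) :
  i < j -> k < l -> (i, j) != (k, l) -> edge_disjoint (f i) (P i j) (f k) (P k l).
Proof.
move=> ij kl; apply: contraNN => /hasP[E Ekl Eij].
have /and3P[pij _ _] := P_path ij.
have [a [b [Eab eab]]] := path_edges_adj pij Eij; subst E.
have on_both w : w \in [set a; b] -> w \in f i :: P i j /\ w \in f k :: P k l.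
  by move=> wE; split; [exact: path_edges_sub Eij _ wE | exact: path_edges_sub Ekl _ wE].
have [ai ak] := on_both a (set21 a b).
have [bi bk] := on_both b (set22 a b).
rewrite (ord_pair_eq ij kl (d_proper eab)) //;
  by [apply: (allP (P_colors ij)) | apply: (allP (P_colors kl))].
Qed.

Lemma bichromatic_vertex_disjoint (i j k l : 'I_6) : i < j -> k < l ->
  [&& i != k, i != l, j != k & j != l] ->
  vertex_disjoint (f i) (P i j) (f k) (P k l).
Proof.
move=> ij kl /and4P[ik il jk jl]; apply/hasPn => w wkl; apply/negP => wij.
have := allP (P_colors ij) w wij; have := allP (P_colors kl) w wkl.
by rewrite !inE => /orP[]/eqP-> /orP[]/eqP ?; subst; rewrite eqxx in ik il jk jl.
Qed.

Lemma v_immersion_K6_of_bichromatic_paths (u : 'I_6) :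
  (forall i j : 'I_6, i < j -> (i == u) || (j == u) -> size (P i j) = 1) ->
  v_immersion_K6 e (f u).
Proof.
move=> P_single; exists f, P, u; split=> //.
- exact: can_inj fK.
- exact: bichromatic_edge_disjoint.
- exact: bichromatic_vertex_disjoint.
Qed.

End BichromaticPaths.

Section KempeChains.

Variables (T : finType) (e : rel T) (v : T) (n : nat).
Hypotheses (e_sym : symmetric e) (e_irr : irreflexive e).

Lemma extend_coloring (c : T -> 'I_n) (i : 'I_n) :
  proper_coloring_minus e v c -> (forall w, e v w -> c w != i) ->
  proper_coloring e (fun w => if w == v then i else c w).
Proof.
move=> c_proper i_free a b eab.
case: (eqVneq a v) => [av|av]; case: (eqVneq b v) => [bv|bv].
- by rewrite av bv e_irr in eab.
- by rewrite eq_sym i_free // -av.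
- by rewrite i_free // -bv e_sym.
- exact: c_proper.
Qed.

Variable c : T -> 'I_n.

Definition kempe_vertex (i j : 'I_n) (w : T) := (w != v) && (c w \in [:: i; j]).

Definition kempe_edge (i j : 'I_n) : rel T :=
  [rel a b | [&& e a b, kempe_vertex i j a & kempe_vertex i j b]].

Lemma connect_kempe_vertex i j x y :
  kempe_vertex i j x -> connect (kempe_edge i j) x y -> kempe_vertex i j y.
Proof.
have closedK : closed (kempe_edge i j) (kempe_vertex i j).
  by move=> a b /and3P[_ Ka Kb]; rewrite /in_mem /= Ka Kb.
by move=> Kx /(closed_connect closedK); rewrite /in_mem /= Kx => <-.
Qed.

Lemma kempe_chain_path i j x y :
  kempe_vertex i j x -> connect (kempe_edge i j) x y ->
  exists s, is_graph_path e x y s && all (kempe_vertex i j) (x :: s).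
Proof.
move=> Kx /connectP[p Kp ->]; case/shortenP: Kp => s Ks us _; exists s.
have es : path e x s by apply: sub_path Ks => a b /andP[].
rewrite /is_graph_path es eqxx us.
by apply/allP => w /(path_connect Ks); apply: connect_kempe_vertex.
Qed.

Definition kempe_swap (i j : 'I_n) (x w : T) : 'I_n :=
  if connect (kempe_edge i j) x w then tperm i j (c w) else c w.

Hypothesis c_proper : proper_coloring_minus e v c.

Lemma kempe_swap_cut i j x a b : a != v -> b != v -> e a b ->
  connect (kempe_edge i j) x a -> ~~ connect (kempe_edge i j) x b ->
  tperm i j (c a) != c b.
Proof.
move=> av bv eab xa; apply: contraNN => swap_ab.
(* An edge leaving the component has an end that is not (i,j)-coloured,
   and tperm i j fixes the colour of that end. *)
have fixed w : w != v -> ~~ kempe_vertex i j w -> tperm i j (c w) = c w.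
  rewrite /kempe_vertex => -> /=; rewrite !inE negb_or => /andP[ni nj].
  by rewrite tpermD // eq_sym.
have ab_differ := negbTE (c_proper av bv eab).
case: (boolP (kempe_vertex i j a)) => Ka; last by rewrite fixed // ab_differ in swap_ab.
case: (boolP (kempe_vertex i j b)) => Kb.
  by apply: connect_trans xa (connect1 _); apply/and3P.
by rewrite -(fixed b) // (inj_eq perm_inj) ab_differ in swap_ab.
Qed.

Lemma proper_kempe_swap i j x : proper_coloring_minus e v (kempe_swap i j x).
Proof.
move=> a b av bv eab; rewrite /kempe_swap.
case: (boolP (connect _ x a)) => xa; case: (boolP (connect _ x b)) => xb.
- by rewrite (inj_eq perm_inj); apply: c_proper.
- exact: (kempe_swap_cut av bv eab xa xb).
- by rewrite eq_sym (kempe_swap_cut bv av _ xb xa) // e_sym.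
- exact: c_proper.
Qed.

Lemma kempe_swap_frees_color i j x y :
  {in [set w | e v w] &, injective c} -> e v x -> e v y -> c x = i -> c y = j ->
  ~~ connect (kempe_edge i j) x y -> forall w, e v w -> kempe_swap i j x w != i.
Proof.
move=> c_inj vx vy cx cy nxy w vw.
rewrite /kempe_swap; case: ifP => xw.
  apply: contraNneq nxy => /(congr1 (tperm i j)); rewrite tpermK tpermL => cw.
  by rewrite (c_inj y w) ?inE // cy cw.
apply: contraFneq xw => cw.
by rewrite (c_inj w x) ?inE // ?cw ?cx.
Qed.

End KempeChains.

Lemma v_immersion_K6_of_kempe_chains (T : finType) (e : rel T) (v : T)
    (c : T -> 'I_5) (x : 'I_5 -> T) :
  symmetric e -> irreflexive e -> proper_coloring_minus e v c ->
  (forall k, e v (x k)) -> (forall k, c (x k) = k) ->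
  (forall i j, connect (kempe_edge e v c i j) (x i) (x j)) ->
  v_immersion_K6 e v.
Proof.
move=> e_sym e_irr c_proper vx cx chains.
have xv k : x k != v by apply: contraTneq (vx k) => ->; rewrite e_irr.
pose d w : 'I_6 := if w == v then ord_max else lift ord_max (c w).
have d_proper : proper_coloring e d.
  apply: extend_coloring => // [a b av bv eab | w _].
    by rewrite (inj_eq (@lift_inj _ _)); apply: c_proper.
  by rewrite eq_sym neq_lift.
pose f (k : 'I_6) := if unlift ord_max k is Some k' then x k' else v.
have fK : cancel f d.
  move=> k; case: (unliftP ord_max k) => [k' ->|->];
    rewrite /f ?liftK ?unlift_none /d ?eqxx //.
  by rewrite (negbTE (xv _)) cx.
have chain i j :
    exists s, is_graph_path e (x i) (x j) s && all (kempe_vertex v c i j) (x i :: s).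
  by apply: kempe_chain_path (chains i j); rewrite /kempe_vertex xv cx !inE eqxx.
pose P (i j : 'I_6) :=
  if (unlift ord_max i, unlift ord_max j) is (Some i', Some j')
  then xchoose (chain i' j') else [:: v].
have fu : f ord_max = v by rewrite /f unlift_none.
have lift_lt (i j : 'I_6) : i < j -> exists i', i = lift ord_max i'.
  case: (unliftP ord_max i) => [i' ->|->]; first by exists i'.
  by rewrite ltnNge leq_ord.
rewrite -fu; apply: (@v_immersion_K6_of_bichromatic_paths _ _ d f P) => //;
  move=> i j /lift_lt[i' ->]; case: (unliftP ord_max j) => [j' ->|->];
  rewrite /f /P ?liftK ?unlift_none //.
- by case/andP: (xchooseP (chain i' j')).
- by rewrite /is_graph_path /= e_sym vx eqxx inE xv.
- case/andP: (xchooseP (chain i' j')) => _; apply: sub_all => w /andP[wv cw].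
  by move: cw; rewrite /d (negbTE wv) !inE !(inj_eq (@lift_inj _ _)).
- by rewrite /= /d (negbTE (xv _)) cx eqxx !inE !eqxx orbT.
- by rewrite !(eq_sym _ ord_max) !(negbTE (neq_lift _ _)).
Qed.

Theorem lemma2p3 (T : finType) (e : rel T) (v : T) :
  symmetric e -> irreflexive e ->
  #|[set w | e v w]| <= 5 ->
  ~ v_immersion_K6 e v ->
  (exists c : T -> 'I_5, proper_coloring_minus e v c) ->
  exists c : T -> 'I_5, proper_coloring e c.
Proof.
move=> e_sym e_irr deg no_imm [c c_proper].
set N := [set w | e v w].
have [c_onto|] := eqVneq (c @: N) setT; last first.
  rewrite eqEsubset subsetT => /subsetPn[i _ iN].
  exists (fun w => if w == v then i else c w); apply: extend_coloring => // w vw.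
  by apply: contraNneq iN => <-; rewrite imset_f ?inE.
have c_inj : {in N &, injective c}.
  by apply/imset_injP; rewrite eqn_leq leq_imset_card c_onto cardsT card_ord.
have xP k : exists w, e v w && (c w == k).
  have /imsetP[w wN ->] : k \in c @: N by rewrite c_onto inE.
  by exists w; rewrite inE in wN; rewrite wN eqxx.
pose x k := xchoose (xP k).
have vx k : e v (x k) by case/andP: (xchooseP (xP k)).
have cx k : c (x k) = k by case/andP: (xchooseP (xP k)) => _ /eqP.
have [chains|] := boolP [forall i, forall j, connect (kempe_edge e v c i j) (x i) (x j)].
  case: no_imm; apply: (v_immersion_K6_of_kempe_chains e_sym e_irr c_proper vx cx) => i j.
  exact: (forallP (forallP chains i) j).
case/forallPn => i /forallPn[j no_chain].
exists (fun w => if w == v then i else kempe_swap e v c i j (x i) w).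
apply: extend_coloring => //; first exact: proper_kempe_swap.
exact: kempe_swap_frees_color.
Qed.
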